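(* Let $q\in(0,1)$ and let $a,b,\alpha,\beta$ be positive real numbers such that $\alpha+\beta t>1$ for all $t\in(0,\infty)$. Define \[ \phi(t)=\frac{(1-q)^{-b\beta t}e^{a\beta\gamma t}\,\Gamma(\alpha+\beta t)^a}{\Gamma_q(\alpha+\beta t)^b},\qquad t\in(0,\infty). \] Then $\phi$ is increasing on $(0,\infty)$, and for every $t\in(0,1)$, \[ \frac{(1-q)^{b\beta t}e^{-a\beta\gamma t}\,\Gamma(\alpha)^a}{\Gamma_q(\alpha)^b} <\frac{\Gamma(\alpha+\beta t)^a}{\Gamma_q(\alpha+\beta t)^b} <\frac{(1-q)^{b\beta(t-1)}e^{a\beta\gamma(1-t)}\,\Gamma(\alpha+\beta)^a}{\Gamma_q(\alpha+\beta)^b}. \]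
   Context: $\Gamma$ is Euler's Gamma function and $\gamma$ is the Euler–Mascheroni constant. For $q\in(0,1)$ and $t>0$, the $q$-Gamma function is $\Gamma_q(t)=(1-q)^{1-t}\prod_{n=1}^{\infty}\frac{1-q^n}{1-q^{t+n}}$. *)

From Stdlib Require Import Reals.
From Coquelicot Require Import Coquelicot.
Open Scope R_scope.

Definition Gamma (x : R) : R :=
  RInt_gen (fun t => Rpower t (x - 1) * exp (- t))
           (at_right 0) (Rbar_locally p_infty).

Definition euler_gamma : R :=
  real (Lim_seq (fun n => sum_f_R0 (fun k => / INR (S k)) n - ln (INR (S n)))).

Fixpoint qGamma_partial (q t : R) (N : nat) : R :=
  match N with
  | O => 1
  | S N' => qGamma_partial q t N' *
            ((1 - q ^ (S N')) / (1 - Rpower q (t + INR (S N'))))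
  end.

Definition qGamma (q t : R) : R :=
  Rpower (1 - q) (1 - t) * real (Lim_seq (fun N => qGamma_partial q t N)).

From Stdlib Require Import Reals Lra Lia Classical_Prop.
From Coquelicot Require Import Coquelicot.
Open Scope R_scope.

(* The powers of [1 - q] in [phi] cancel against the prefactor [(1 - q) ^ (1 - z)] of
   [qGamma q z], so [phi t] is, up to a positive constant, the exponential of
   [a (ln Gamma z + euler_gamma z) - b ln P (z)] at [z = alpha + beta t], where [P] is the
   infinite product in [qGamma].  Each factor of [P] decreases in [z], so [- ln P] is
   strictly increasing.  [ln Gamma z + euler_gamma z] is nondecreasing on [1, +oo): by
   Hoelder's inequality [ln Gamma] is convex, and combined with
   [Gamma (z + 1) = z Gamma z] this gives
   [ln Gamma (z + h) - ln Gamma z >= h (ln (z + m) - sum_(k <= m) 1 / (z + k))] for all [m],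
   whose limit is [- h euler_gamma].  The two-sided bound compares [t] with [0] and [1].
   The hypothesis on [alpha + beta t] forces [alpha >= 1]. *)

Lemma exp_le_compat x y : x <= y -> exp x <= exp y.
Proof.
  intros [Hlt | ->]; [left; apply exp_increasing, Hlt | right; reflexivity].
Qed.

Lemma ln_le_sub_1 y : 0 < y -> ln y <= y - 1.
Proof. intros Hy. pose proof (exp_ineq1_le (ln y)) as H. rewrite exp_ln in H; lra. Qed.

(* [exp] lies above its tangent line at the convex combination [s]. *)
Lemma exp_convex l X Y : 0 <= l <= 1 ->
  exp (l * X + (1 - l) * Y) <= l * exp X + (1 - l) * exp Y.
Proof.
  intros Hl. set (s := l * X + (1 - l) * Y).
  assert (EX : exp X = exp s * exp (X - s)) by (rewrite <- exp_plus; f_equal; ring).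
  assert (EY : exp Y = exp s * exp (Y - s)) by (rewrite <- exp_plus; f_equal; ring).
  pose proof (exp_ineq1_le (X - s)). pose proof (exp_ineq1_le (Y - s)).
  pose proof (exp_pos s).
  assert (exp s * (1 + (X - s)) <= exp X) by (rewrite EX; nra).
  assert (exp s * (1 + (Y - s)) <= exp Y) by (rewrite EY; nra).
  assert (l * (exp s * (1 + (X - s))) + (1 - l) * (exp s * (1 + (Y - s))) = exp s)
    by (unfold s; ring).
  nra.
Qed.

Lemma ball_R_Rabs (x e y : R) : ball (M := R_UniformSpace) x e y <-> Rabs (y - x) < e.
Proof. reflexivity. Qed.

Lemma RInt_lin_comb (f g : R -> R) p r a b : ex_RInt f a b -> ex_RInt g a b ->
  RInt (fun t => p * f t + r * g t) a b = p * RInt f a b + r * RInt g a b.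
Proof.
  intros Hf Hg.
  assert (Hpf : RInt (fun t => p * f t) a b = p * RInt f a b)
    by exact (RInt_scal (V := R_CompleteNormedModule) f a b p Hf).
  assert (Hrg : RInt (fun t => r * g t) a b = r * RInt g a b)
    by exact (RInt_scal (V := R_CompleteNormedModule) g a b r Hg).
  rewrite <- Hpf, <- Hrg.
  exact (RInt_plus (V := R_CompleteNormedModule) (fun t => p * f t) (fun t => r * g t) a b
           (ex_RInt_scal (V := R_CompleteNormedModule) f a b p Hf)
           (ex_RInt_scal (V := R_CompleteNormedModule) g a b r Hg)).
Qed.

Lemma at_right_0_pinfty_eventually (a0 b0 : R) : 0 < a0 ->
  filter_prod (at_right 0) (Rbar_locally p_infty)
    (fun ab => 0 < fst ab < a0 /\ b0 < snd ab).
Proof.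
  intros Ha0.
  apply (Filter_prod _ _ _ (fun a => 0 < a < a0) (fun b => b0 < b)).
  - exists (mkposreal a0 Ha0). intros y Hy Hy0. rewrite ball_R_Rabs in Hy.
    cbn [pos] in Hy. apply Rabs_def2 in Hy. lra.
  - exists b0. auto.
  - simpl. auto.
Qed.

Lemma at_right_0_pinfty_on_pos (P : R -> Prop) : (forall t, 0 < t -> P t) ->
  filter_prod (at_right 0) (Rbar_locally p_infty)
    (fun ab => forall z, Rmin (fst ab) (snd ab) <= z <= Rmax (fst ab) (snd ab) -> P z).
Proof.
  intros HP. eapply filter_imp; [|apply (at_right_0_pinfty_eventually 1 1); lra].
  intros [a b] [Ha Hb] z [Hz _]; simpl in *. apply HP.
  unfold Rmin in Hz; destruct Rle_dec; lra.
Qed.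

Section Improper_integral_nonneg.

Variable g : R -> R.
Hypothesis g_cont : forall t, 0 < t -> continuous g t.
Hypothesis g_nonneg : forall t, 0 < t -> 0 <= g t.

Lemma ex_RInt_pos a b : 0 < a -> 0 < b -> ex_RInt g a b.
Proof.
  intros Ha Hb. apply (ex_RInt_continuous (V := R_CompleteNormedModule)).
  intros z [Hz _]. apply g_cont. unfold Rmin in Hz; destruct Rle_dec; lra.
Qed.

Lemma RInt_le_RInt_superinterval a a' b' b :
  0 < a -> a <= a' -> a' <= b' -> b' <= b -> RInt g a' b' <= RInt g a b.
Proof.
  intros Ha H1 H2 H3.
  rewrite <- (RInt_Chasles g a a' b) by (apply ex_RInt_pos; lra).
  rewrite <- (RInt_Chasles g a' b' b) by (apply ex_RInt_pos; lra).
  assert (Hpos : forall c d, 0 < c <= d -> 0 <= RInt g c d)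
    by (intros c d Hcd; apply RInt_ge_0; [lra | apply ex_RInt_pos; lra |
       intros; apply g_nonneg; lra]).
  pose proof (Hpos a a' ltac:(lra)). pose proof (Hpos b' b ltac:(lra)).
  change plus with Rplus. simpl. lra.
Qed.

Definition RInt_values (v : R) : Prop := exists a b, 0 < a <= b /\ v = RInt g a b.

(* The integrals over [a, b] increase as [a] decreases to 0 and [b] increases to +oo,
   so their supremum is the improper integral. *)
Lemma is_RInt_gen_lub l :
  is_lub RInt_values l -> is_RInt_gen g (at_right 0) (Rbar_locally p_infty) l.
Proof.
  intros [Hub Hleast].
  unfold is_RInt_gen, filterlimi, filter_le, filtermapi. intros P [eps HP].
  assert (Happrox : exists a0 b0, 0 < a0 <= b0 /\ l - eps < RInt g a0 b0).
  { apply NNPP. intros Hno.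
    assert (l <= l - eps).
    { apply Hleast. intros v [a [b [Hab ->]]].
      apply Rnot_lt_le. intros Hlt. apply Hno. exists a, b. auto. }
    pose proof (cond_pos eps). lra. }
  destruct Happrox as [a0 [b0 [Hab0 Hlt]]].
  eapply filter_imp; [|apply (at_right_0_pinfty_eventually a0 b0); lra].
  intros [a b] [Ha Hb]; simpl in *.
  exists (RInt g a b). split.
  - apply (RInt_correct (V := R_CompleteNormedModule)), ex_RInt_pos; lra.
  - apply HP, ball_R_Rabs.
    assert (RInt g a b <= l) by (apply Hub; exists a, b; split; [lra | reflexivity]).
    assert (RInt g a0 b0 <= RInt g a b) by (apply RInt_le_RInt_superinterval; lra).
    apply Rabs_def1; lra.
Qed.

End Improper_integral_nonneg.

Definition Gamma_integrand (x t : R) : R := Rpower t (x - 1) * exp (- t).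

Lemma Gamma_integrand_exp x t : Gamma_integrand x t = exp ((x - 1) * ln t - t).
Proof. unfold Gamma_integrand, Rpower. rewrite <- exp_plus. f_equal; ring. Qed.

Lemma Gamma_integrand_pos x t : 0 < Gamma_integrand x t.
Proof. rewrite Gamma_integrand_exp. apply exp_pos. Qed.

Lemma Gamma_integrand_continuous x t : 0 < t -> continuous (Gamma_integrand x) t.
Proof.
  intros Ht. apply (ex_derive_continuous (K := R_AbsRing) (V := R_NormedModule)).
  unfold Gamma_integrand, Rpower. auto_derive. lra.
Qed.

(* From [ln (t / (2 x)) <= t / (2 x) - 1]: the power [t ^ (x - 1)] costs at most
   half of the decay of [e ^ -t]. *)
Lemma Gamma_integrand_le_exp_half x t : 1 <= x -> 0 < t ->
  Gamma_integrand x t <= exp ((x - 1) * ln (2 * x)) * exp (- t / 2).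
Proof.
  intros Hx Ht. rewrite Gamma_integrand_exp, <- exp_plus. apply exp_le_compat.
  assert (Hln : ln (t / (2 * x)) <= t / (2 * x) - 1)
    by (apply ln_le_sub_1, Rdiv_lt_0_compat; lra).
  rewrite ln_div in Hln by lra.
  assert (H1 : (x - 1) * (ln t - ln (2 * x)) <= (x - 1) * (t / (2 * x) - 1))
    by (apply Rmult_le_compat_l; lra).
  assert (H2 : (x - 1) * (t / (2 * x)) <= t / 2).
  { replace ((x - 1) * (t / (2 * x))) with (t / 2 - t / (2 * x)) by (field; lra).
    assert (0 <= t / (2 * x)) by (apply Rlt_le, Rdiv_lt_0_compat; lra). lra. }
  nra.
Qed.

Lemma RInt_Gamma_integrand_le x a b : 1 <= x -> 0 < a -> a <= b ->
  RInt (Gamma_integrand x) a b <= 2 * exp ((x - 1) * ln (2 * x)).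
Proof.
  intros Hx Ha Hab. set (C := exp ((x - 1) * ln (2 * x))).
  assert (Hprim : is_RInt (fun t => C * exp (- t / 2)) a b
                    (minus (-2 * C * exp (- b / 2)) (-2 * C * exp (- a / 2)))).
  { apply (is_RInt_derive (V := R_CompleteNormedModule) (fun t => -2 * C * exp (- t / 2))).
    - intros t _. auto_derive; [auto |]. unfold Rdiv. set (E := exp _). field.
    - intros t _. apply (ex_derive_continuous (K := R_AbsRing) (V := R_NormedModule)).
      auto_derive. auto. }
  assert (Hle : RInt (Gamma_integrand x) a b <= RInt (fun t => C * exp (- t / 2)) a b).
  { apply RInt_le; [lra | | eexists; exact Hprim |].
    - apply ex_RInt_pos; [intros; apply Gamma_integrand_continuous; auto | lra | lra].
    - intros t Ht. apply Gamma_integrand_le_exp_half; lra. }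
  rewrite (is_RInt_unique _ _ _ _ Hprim) in Hle. unfold minus, plus, opp in Hle; simpl in Hle.
  assert (0 < C) by apply exp_pos.
  assert (C * exp (- a / 2) <= C * 1)
    by (apply Rmult_le_compat_l; [lra | rewrite <- exp_0; apply exp_le_compat; lra]).
  assert (0 <= C * exp (- b / 2)) by (apply Rmult_le_pos; [lra | apply Rlt_le, exp_pos]).
  lra.
Qed.

Lemma Gamma_is_lub x : 1 <= x -> is_lub (RInt_values (Gamma_integrand x)) (Gamma x).
Proof.
  intros Hx.
  assert (Hcont : forall t, 0 < t -> continuous (Gamma_integrand x) t)
    by (intros; apply Gamma_integrand_continuous; auto).
  assert (Hnonneg : forall t, 0 < t -> 0 <= Gamma_integrand x t)
    by (intros; apply Rlt_le, Gamma_integrand_pos).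
  assert (Hbound : bound (RInt_values (Gamma_integrand x))).
  { exists (2 * exp ((x - 1) * ln (2 * x))). intros v [a [b [Hab ->]]].
    apply RInt_Gamma_integrand_le; lra. }
  assert (Hinhab : exists v, RInt_values (Gamma_integrand x) v)
    by (exists (RInt (Gamma_integrand x) 1 1), 1, 1; split; [lra | reflexivity]).
  destruct (completeness _ Hbound Hinhab) as [l Hl].
  replace (Gamma x) with l; [exact Hl |].
  symmetry. exact (is_RInt_gen_unique (V := R_CompleteNormedModule) _ l
                     (is_RInt_gen_lub _ Hcont Hnonneg l Hl)).
Qed.

Lemma is_RInt_gen_Gamma x : 1 <= x ->
  is_RInt_gen (Gamma_integrand x) (at_right 0) (Rbar_locally p_infty) (Gamma x).
Proof.
  intros Hx. apply is_RInt_gen_lub; [intros; apply Gamma_integrand_continuous; auto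
    | intros; apply Rlt_le, Gamma_integrand_pos | apply Gamma_is_lub, Hx].
Qed.

Lemma RInt_Gamma_integrand_le_Gamma x a b : 1 <= x -> 0 < a <= b ->
  RInt (Gamma_integrand x) a b <= Gamma x.
Proof. intros Hx Hab. apply (Gamma_is_lub x Hx). exists a, b. auto. Qed.

Lemma Gamma_pos x : 1 <= x -> 0 < Gamma x.
Proof.
  intros Hx. apply Rlt_le_trans with (RInt (Gamma_integrand x) 1 2).
  - apply RInt_gt_0; [lra | intros; apply Gamma_integrand_pos |].
    intros; apply Gamma_integrand_continuous; lra.
  - apply RInt_Gamma_integrand_le_Gamma; lra.
Qed.

Lemma Gamma_integrand_lim_0 y : 2 <= y ->
  filterlim (Gamma_integrand y) (at_right 0) (locally 0).
Proof.
  intros Hy P [eps HP]. unfold filtermap.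
  assert (Hd : 0 < Rmin 1 eps) by (apply Rmin_pos; [lra | apply cond_pos]).
  exists (mkposreal _ Hd). intros t Ht Ht0.
  rewrite ball_R_Rabs in Ht. cbn [pos] in Ht. rewrite Rminus_0_r, Rabs_pos_eq in Ht by lra.
  pose proof (Rmin_l 1 eps). pose proof (Rmin_r 1 eps).
  apply HP, ball_R_Rabs.
  rewrite Rminus_0_r, Rabs_pos_eq by apply Rlt_le, Gamma_integrand_pos.
  assert (Hln : ln t <= 0) by (rewrite <- ln_1; apply ln_le; lra).
  apply Rle_lt_trans with (exp (ln t)); [| rewrite exp_ln; lra].
  rewrite Gamma_integrand_exp. apply exp_le_compat. nra.
Qed.

Lemma Gamma_integrand_lim_pinfty y : 1 <= y ->
  filterlim (Gamma_integrand y) (Rbar_locally p_infty) (locally 0).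
Proof.
  intros Hy P [eps HP]. unfold filtermap.
  set (C := exp ((y - 1) * ln (2 * y))).
  assert (HC : 0 < C) by apply exp_pos.
  assert (HeC : 0 < eps / C) by (apply Rdiv_lt_0_compat; [apply cond_pos | exact HC]).
  exists (Rmax 1 (- 2 * ln (eps / C))). intros t Ht.
  pose proof (Rmax_l 1 (- 2 * ln (eps / C))). pose proof (Rmax_r 1 (- 2 * ln (eps / C))).
  apply HP, ball_R_Rabs.
  rewrite Rminus_0_r, Rabs_pos_eq by apply Rlt_le, Gamma_integrand_pos.
  eapply Rle_lt_trans; [apply Gamma_integrand_le_exp_half; lra |]. fold C.
  assert (Hexp : exp (- t / 2) < eps / C)
    by (rewrite <- (exp_ln (eps / C)) by exact HeC; apply exp_increasing; lra).
  apply (Rmult_lt_compat_l C) in Hexp; [| exact HC].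
  replace (C * (eps / C)) with (pos eps) in Hexp by (field; lra). exact Hexp.
Qed.

Lemma continuous_Derive_pos (F f : R -> R) t : 0 < t ->
  (forall s, 0 < s -> is_derive F s (f s)) -> continuous f t -> continuous (Derive F) t.
Proof.
  intros Ht HF Hf. apply (continuous_ext_loc _ f); [| exact Hf].
  exists (mkposreal t Ht). intros s Hs. rewrite ball_R_Rabs in Hs. cbn [pos] in Hs.
  apply Rabs_def2 in Hs. symmetry. apply is_derive_unique, HF. lra.
Qed.

(* Integration by parts, with boundary terms [t ^ x e ^ -t] vanishing at 0 and +oo. *)
Lemma Gamma_succ x : 1 <= x -> Gamma (x + 1) = x * Gamma x.
Proof.
  intros Hx.
  set (f := fun t => x * Gamma_integrand x t - Gamma_integrand (x + 1) t).
  assert (Hder : forall t, 0 < t -> is_derive (Gamma_integrand (x + 1)) t (f t)).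
  { intros t Ht. unfold f, Gamma_integrand, Rpower. auto_derive; [lra |].
    replace ((x + 1 - 1) * ln t) with ((x - 1) * ln t + ln t) by ring.
    rewrite exp_plus, exp_ln by lra. field. lra. }
  assert (Hf : is_RInt_gen f (at_right 0) (Rbar_locally p_infty) (0 - 0)).
  { apply (is_RInt_gen_ext (Derive (Gamma_integrand (x + 1)))).
    - eapply filter_imp;
        [| apply (at_right_0_pinfty_on_pos (fun t => Derive (Gamma_integrand (x + 1)) t = f t))].
      + intros ab H z Hz. apply H. lra.
      + intros t Ht. apply is_derive_unique, Hder, Ht.
    - apply is_RInt_gen_Derive.
      + apply at_right_0_pinfty_on_pos. intros t Ht. eexists. apply Hder, Ht.
      + apply at_right_0_pinfty_on_pos. intros t Ht.
        apply (continuous_Derive_pos _ f t Ht Hder).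
        apply (ex_derive_continuous (K := R_AbsRing) (V := R_NormedModule)).
        unfold f, Gamma_integrand, Rpower. auto_derive. lra.
      + apply Gamma_integrand_lim_0. lra.
      + apply Gamma_integrand_lim_pinfty. lra. }
  assert (Hcomb := is_RInt_gen_minus _ _ _ _
                     (is_RInt_gen_scal _ x _ (is_RInt_gen_Gamma x Hx))
                     (is_RInt_gen_Gamma (x + 1) ltac:(lra))).
  assert (E : minus (scal x (Gamma x)) (Gamma (x + 1)) = 0 - 0).
  { etransitivity.
    - symmetry. exact (is_RInt_gen_unique (V := R_CompleteNormedModule) _ _ Hcomb).
    - exact (is_RInt_gen_unique (V := R_CompleteNormedModule) _ _ Hf). }
  unfold minus, plus, opp, scal in E; simpl in E. unfold mult in E; simpl in E. lra.
Qed.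

(* Weighted AM-GM between the normalised integrands [Gamma_integrand u / Gu] and
   [Gamma_integrand w / Gw]; integrating it gives Hoelder's inequality for Gamma. *)
Lemma Gamma_integrand_interpolation l u w Gu Gw t : 0 <= l <= 1 -> 0 < Gu -> 0 < Gw ->
  Gamma_integrand (l * u + (1 - l) * w) t <=
  exp (l * ln Gu + (1 - l) * ln Gw) * l / Gu * Gamma_integrand u t
  + exp (l * ln Gu + (1 - l) * ln Gw) * (1 - l) / Gw * Gamma_integrand w t.
Proof.
  intros Hl HGu HGw. rewrite !Gamma_integrand_exp.
  set (M := exp (l * ln Gu + (1 - l) * ln Gw)).
  set (X := (u - 1) * ln t - t). set (Y := (w - 1) * ln t - t).
  replace ((l * u + (1 - l) * w - 1) * ln t - t)
    with ((l * ln Gu + (1 - l) * ln Gw) + (l * (X - ln Gu) + (1 - l) * (Y - ln Gw)))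
    by (unfold X, Y; ring).
  rewrite exp_plus. fold M.
  eapply Rle_trans; [apply Rmult_le_compat_l; [apply Rlt_le, exp_pos | apply exp_convex, Hl] |].
  unfold Rminus. rewrite !exp_plus, !exp_Ropp, !exp_ln by assumption.
  right. field. lra.
Qed.

Lemma ln_Gamma_convex l u w : 0 <= l <= 1 -> 1 <= u -> 1 <= w ->
  ln (Gamma (l * u + (1 - l) * w)) <= l * ln (Gamma u) + (1 - l) * ln (Gamma w).
Proof.
  intros Hl Hu Hw.
  assert (HGu := Gamma_pos u Hu). assert (HGw := Gamma_pos w Hw).
  assert (Hv : 1 <= l * u + (1 - l) * w) by nra.
  set (M := exp (l * ln (Gamma u) + (1 - l) * ln (Gamma w))).
  rewrite <- (ln_exp (l * ln (Gamma u) + (1 - l) * ln (Gamma w))). fold M.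
  apply ln_le; [apply Gamma_pos, Hv |].
  apply (Gamma_is_lub _ Hv). intros v [a [b [Hab ->]]].
  assert (Hcont : forall x t, 0 < t -> continuous (Gamma_integrand x) t)
    by (intros; apply Gamma_integrand_continuous; auto).
  assert (Hex : forall x, ex_RInt (Gamma_integrand x) a b)
    by (intros x; apply ex_RInt_pos; [apply Hcont | lra | lra]).
  apply Rle_trans with
    (RInt (fun t => M * l / Gamma u * Gamma_integrand u t
                    + M * (1 - l) / Gamma w * Gamma_integrand w t) a b).
  - apply RInt_le; [lra | apply Hex | |].
    + apply (ex_RInt_plus (V := R_CompleteNormedModule));
        apply (ex_RInt_scal (V := R_CompleteNormedModule)), Hex.
    + intros t _. apply Gamma_integrand_interpolation; assumption.
  - rewrite RInt_lin_comb by apply Hex.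
    assert (0 < M) by apply exp_pos.
    apply Rle_trans with (M * l / Gamma u * Gamma u + M * (1 - l) / Gamma w * Gamma w).
    + apply Rplus_le_compat; apply Rmult_le_compat_l;
        try (apply RInt_Gamma_integrand_le_Gamma; lra);
        unfold Rdiv; apply Rmult_le_pos; try (apply Rlt_le, Rinv_0_lt_compat; assumption); nra.
    + right. field. lra.
Qed.

Lemma ln_Gamma_succ z : 1 <= z -> ln (Gamma (z + 1)) = ln (Gamma z) + ln z.
Proof.
  intros Hz. rewrite Gamma_succ, ln_mult by (try apply Gamma_pos; lra). ring.
Qed.

Definition harmonic_minus_ln (n : nat) : R :=
  sum_f_R0 (fun k => / INR (S k)) n - ln (INR (S n)).

Lemma harmonic_minus_ln_decr n : harmonic_minus_ln (S n) <= harmonic_minus_ln n.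
Proof.
  unfold harmonic_minus_ln. rewrite tech5.
  assert (H : ln (INR (S n) / INR (S (S n))) <= INR (S n) / INR (S (S n)) - 1)
    by (apply ln_le_sub_1, Rdiv_lt_0_compat; apply lt_0_INR; lia).
  rewrite ln_div in H by (apply lt_0_INR; lia).
  replace (INR (S n) / INR (S (S n)) - 1) with (- / INR (S (S n))) in H; [lra |].
  rewrite (S_INR (S n)). field. rewrite S_INR. pose proof (pos_INR n). lra.
Qed.

Lemma ln_le_harmonic n : ln (INR (S (S n))) <= sum_f_R0 (fun k => / INR (S k)) n.
Proof.
  induction n as [|n IH].
  - simpl. replace (1 + 1) with 2 by ring. rewrite Rinv_1.
    pose proof (ln_le_sub_1 2 ltac:(lra)). lra.
  - rewrite tech5.
    assert (H : ln (INR (S (S (S n))) / INR (S (S n))) <= INR (S (S (S n))) / INR (S (S n)) - 1)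
      by (apply ln_le_sub_1, Rdiv_lt_0_compat; apply lt_0_INR; lia).
    rewrite ln_div in H by (apply lt_0_INR; lia).
    replace (INR (S (S (S n))) / INR (S (S n)) - 1) with (/ INR (S (S n))) in H; [lra |].
    rewrite (S_INR (S (S n))). field. apply Rgt_not_eq, lt_0_INR. lia.
Qed.

Lemma is_lim_seq_harmonic_minus_ln : is_lim_seq harmonic_minus_ln euler_gamma.
Proof.
  assert (Hex : ex_finite_lim_seq harmonic_minus_ln).
  { apply (ex_finite_lim_seq_decr _ 0); [apply harmonic_minus_ln_decr |].
    intros n. unfold harmonic_minus_ln. pose proof (ln_le_harmonic n).
    assert (ln (INR (S n)) <= ln (INR (S (S n))))
      by (apply ln_le; [apply lt_0_INR; lia | apply le_INR; lia]).
    lra. }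
  destruct Hex as [l Hl].
  unfold euler_gamma. fold harmonic_minus_ln. rewrite (is_lim_seq_unique _ _ Hl). exact Hl.
Qed.

Section ln_Gamma_increment.

Variable h : R.
Hypothesis Hh : 0 < h.

Let ln_Gamma_incr z := ln (Gamma (z + h)) - ln (Gamma z).

Lemma ln_Gamma_incr_succ z : 1 <= z ->
  ln_Gamma_incr z = ln_Gamma_incr (z + 1) - (ln (z + h) - ln z).
Proof.
  intros Hz. unfold ln_Gamma_incr. replace (z + 1 + h) with (z + h + 1) by ring.
  rewrite !ln_Gamma_succ by lra. ring.
Qed.

(* Convexity of [ln Gamma] on the three points [z < z + 1 < z + 1 + h]. *)
Lemma ln_Gamma_incr_succ_ge z : 1 <= z -> h * ln z <= ln_Gamma_incr (z + 1).
Proof.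
  intros Hz. unfold ln_Gamma_incr.
  assert (H := ln_Gamma_convex (h / (1 + h)) z (z + 1 + h)).
  replace (h / (1 + h) * z + (1 - h / (1 + h)) * (z + 1 + h)) with (z + 1) in H
    by (field; lra).
  assert (Hl : 0 <= h / (1 + h) <= 1).
  { split; [apply Rlt_le, Rdiv_lt_0_compat; lra |].
    apply Rmult_le_reg_r with (1 + h); [lra |]. field_simplify; lra. }
  specialize (H Hl Hz ltac:(lra)).
  rewrite ln_Gamma_succ in H |- * by lra.
  apply Rmult_le_compat_l with (r := 1 + h) in H; [| lra].
  replace ((1 + h) * (h / (1 + h) * ln (Gamma z) + (1 - h / (1 + h)) * ln (Gamma (z + 1 + h))))
    with (h * ln (Gamma z) + ln (Gamma (z + 1 + h))) in H by (field; lra).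
  nra.
Qed.

Lemma ln_Gamma_incr_ge_partial_sum m : forall z, 1 <= z ->
  h * ln (z + INR m) - h * sum_f_R0 (fun k => / (z + INR k)) m <= ln_Gamma_incr z.
Proof.
  assert (Hstep : forall z, 1 <= z -> ln (z + h) - ln z <= h / z).
  { intros z Hz. rewrite <- ln_div by lra.
    eapply Rle_trans; [apply ln_le_sub_1, Rdiv_lt_0_compat; lra | right; field; lra]. }
  induction m as [|m IH]; intros z Hz; rewrite (ln_Gamma_incr_succ z Hz).
  - simpl. rewrite Rplus_0_r.
    pose proof (ln_Gamma_incr_succ_ge z Hz). pose proof (Hstep z Hz). unfold Rdiv in *. lra.
  - pose proof (IH (z + 1) ltac:(lra)). pose proof (Hstep z Hz).
    rewrite decomp_sum by lia. simpl pred. rewrite Rplus_0_r.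
    assert (E : sum_f_R0 (fun i => / (z + INR (S i))) m
                = sum_f_R0 (fun k => / (z + 1 + INR k)) m)
      by (apply sum_eq; intros i _; rewrite S_INR; f_equal; ring).
    rewrite E. replace (z + INR (S m)) with (z + 1 + INR m) by (rewrite S_INR; ring).
    unfold Rdiv in *. lra.
Qed.

Lemma ln_Gamma_incr_ge_harmonic m z : 1 <= z -> - h * harmonic_minus_ln m <= ln_Gamma_incr z.
Proof.
  intros Hz. eapply Rle_trans; [| apply (ln_Gamma_incr_ge_partial_sum m z Hz)].
  unfold harmonic_minus_ln.
  assert (ln (INR (S m)) <= ln (z + INR m))
    by (apply ln_le; rewrite S_INR; pose proof (pos_INR m); lra).
  assert (sum_f_R0 (fun k => / (z + INR k)) m <= sum_f_R0 (fun k => / INR (S k)) m).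
  { apply sum_Rle. intros n _. rewrite S_INR. pose proof (pos_INR n).
    apply Rinv_le_contravar; lra. }
  nra.
Qed.

Lemma ln_Gamma_shift_ge z : 1 <= z -> - h * euler_gamma <= ln (Gamma (z + h)) - ln (Gamma z).
Proof.
  intros Hz.
  exact (is_lim_seq_le _ _ _ _ (fun m => ln_Gamma_incr_ge_harmonic m z Hz)
           (is_lim_seq_scal_l _ (- h) _ is_lim_seq_harmonic_minus_ln)
           (is_lim_seq_const (ln_Gamma_incr z))).
Qed.

End ln_Gamma_increment.

Definition qGamma_factor (q t : R) (n : nat) : R :=
  (1 - q ^ S n) / (1 - Rpower q (t + INR (S n))).

Definition qGamma_product (q t : R) : R := real (Lim_seq (qGamma_partial q t)).

Lemma qGamma_partial_S q t N :
  qGamma_partial q t (S N) = qGamma_partial q t N * qGamma_factor q t N.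
Proof. reflexivity. Qed.

Lemma qGamma_product_eq q t : qGamma q t = Rpower (1 - q) (1 - t) * qGamma_product q t.
Proof. reflexivity. Qed.

Section q_product.

Variable q : R.
Hypothesis Hq : 0 < q < 1.

Lemma Rpower_q_decr x y : x < y -> Rpower q y < Rpower q x.
Proof.
  intros Hxy. unfold Rpower. apply exp_increasing.
  assert (ln q < 0) by (rewrite <- ln_1; apply ln_increasing; lra). nra.
Qed.

Lemma Rpower_q_shift_lt t n : 0 < t -> Rpower q (t + INR n) < q ^ n.
Proof.
  intros Ht. rewrite Rpower_plus, Rpower_pow by lra.
  assert (Rpower q t < 1) by (rewrite <- (Rpower_O q) by lra; apply Rpower_q_decr, Ht).
  assert (0 < Rpower q t) by apply exp_pos.
  pose proof (pow_lt q n ltac:(lra)). nra.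
Qed.

Lemma qGamma_factor_bounds t n : 0 < t ->
  1 - q ^ S n <= qGamma_factor q t n < 1.
Proof.
  intros Ht. unfold qGamma_factor.
  pose proof (Rpower_q_shift_lt t (S n) Ht).
  pose proof (pow_lt_1_compat q (S n) ltac:(lra) ltac:(lia)).
  assert (0 < Rpower q (t + INR (S n))) by apply exp_pos.
  split.
  - apply Rmult_le_reg_r with (1 - Rpower q (t + INR (S n))); [lra |].
    unfold Rdiv. rewrite Rmult_assoc, Rinv_l by lra. nra.
  - apply Rmult_lt_reg_r with (1 - Rpower q (t + INR (S n))); [lra |].
    unfold Rdiv. rewrite Rmult_assoc, Rinv_l by lra. lra.
Qed.

Lemma qGamma_factor_pos t n : 0 < t -> 0 < qGamma_factor q t n.
Proof.
  intros Ht. pose proof (qGamma_factor_bounds t n Ht).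
  pose proof (pow_lt_1_compat q (S n) ltac:(lra) ltac:(lia)). lra.
Qed.

Lemma qGamma_factor_strict_anti x y n : 0 < x < y -> qGamma_factor q y n < qGamma_factor q x n.
Proof.
  intros Hxy. unfold qGamma_factor.
  pose proof (Rpower_q_shift_lt x (S n) ltac:(lra)).
  pose proof (Rpower_q_decr (x + INR (S n)) (y + INR (S n)) ltac:(lra)).
  pose proof (pow_lt_1_compat q (S n) ltac:(lra) ltac:(lia)).
  assert (0 < Rpower q (y + INR (S n))) by apply exp_pos.
  unfold Rdiv. apply Rmult_lt_compat_l; [lra |]. apply Rinv_lt_contravar; nra.
Qed.

Lemma qGamma_partial_pos t N : 0 < t -> 0 < qGamma_partial q t N.
Proof.
  intros Ht. induction N as [|N IH]; [simpl; lra |].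
  rewrite qGamma_partial_S. pose proof (qGamma_factor_pos t N Ht). nra.
Qed.

Lemma qGamma_partial_decr t N : 0 < t -> qGamma_partial q t (S N) <= qGamma_partial q t N.
Proof.
  intros Ht. rewrite qGamma_partial_S. pose proof (qGamma_factor_bounds t N Ht).
  pose proof (qGamma_partial_pos t N Ht). nra.
Qed.

Lemma exp_le_one_minus u : 0 <= u <= q -> exp (- (u / (1 - q))) <= 1 - u.
Proof.
  intros Hu. rewrite exp_Ropp.
  pose proof (exp_ineq1_le (u / (1 - q))). pose proof (exp_pos (u / (1 - q))).
  assert (1 <= (1 - u) * (1 + u / (1 - q))).
  { replace ((1 - u) * (1 + u / (1 - q))) with (1 + u * (q - u) / (1 - q)) by (field; lra).
    assert (0 <= u * (q - u) / (1 - q))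
      by (apply Rmult_le_pos; [nra | apply Rlt_le, Rinv_0_lt_compat; lra]).
    lra. }
  apply Rmult_le_reg_r with (exp (u / (1 - q))); [assumption |].
  rewrite Rinv_l by lra. nra.
Qed.

(* [sum_{n=1}^{N} q^n / (1 - q) = (q - q^(N+1)) / (1 - q)^2]. *)
Lemma qGamma_partial_lower_bound t N : 0 < t ->
  exp (- ((q - q ^ S N) / (1 - q) ^ 2)) <= qGamma_partial q t N.
Proof.
  intros Ht. induction N as [|N IH].
  - simpl. replace (q - q * 1) with 0 by ring.
    unfold Rdiv. rewrite Rmult_0_l, Ropp_0, exp_0. lra.
  - rewrite qGamma_partial_S. destruct (qGamma_factor_bounds t N Ht) as [Hfac _].
    assert (Hpow : exp (- (q ^ S N / (1 - q))) <= 1 - q ^ S N).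
    { apply exp_le_one_minus. split; [apply pow_le; lra |].
      assert (q ^ N <= 1) by (rewrite <- (pow1 N); apply pow_incr; lra).
      pose proof (pow_le q N ltac:(lra)). simpl. nra. }
    replace (- ((q - q ^ S (S N)) / (1 - q) ^ 2))
      with (- ((q - q ^ S N) / (1 - q) ^ 2) + - (q ^ S N / (1 - q))) by (simpl; field; lra).
    rewrite exp_plus. apply Rmult_le_compat; try (apply Rlt_le, exp_pos); lra.
Qed.

Lemma is_lim_seq_qGamma_partial t : 0 < t ->
  is_lim_seq (qGamma_partial q t) (qGamma_product q t).
Proof.
  intros Ht.
  assert (Hex : ex_finite_lim_seq (qGamma_partial q t)).
  { apply (ex_finite_lim_seq_decr _ 0).
    - intros; apply qGamma_partial_decr, Ht.
    - intros; apply Rlt_le, qGamma_partial_pos, Ht. }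
  destruct Hex as [l Hl].
  unfold qGamma_product. rewrite (is_lim_seq_unique _ _ Hl). exact Hl.
Qed.

Lemma qGamma_product_pos t : 0 < t -> 0 < qGamma_product q t.
Proof.
  intros Ht.
  assert (Hbound : forall N, exp (- (q / (1 - q) ^ 2)) <= qGamma_partial q t N).
  { intros N. eapply Rle_trans; [| apply (qGamma_partial_lower_bound t N Ht)].
    apply exp_le_compat, Ropp_le_contravar. unfold Rdiv. apply Rmult_le_compat_r.
    - apply Rlt_le, Rinv_0_lt_compat, pow_lt. lra.
    - pose proof (pow_lt q (S N) ltac:(lra)). lra. }
  apply Rlt_le_trans with (exp (- (q / (1 - q) ^ 2))); [apply exp_pos |].
  exact (is_lim_seq_le _ _ _ _ Hbound (is_lim_seq_const _) (is_lim_seq_qGamma_partial t Ht)).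
Qed.

(* Every factor decreases in [t], the first one by the fixed ratio [k > 1]. *)
Lemma qGamma_product_strict_anti x y : 0 < x < y -> qGamma_product q y < qGamma_product q x.
Proof.
  intros Hxy.
  assert (Hy0 := qGamma_factor_pos y 0 ltac:(lra)).
  set (k := qGamma_factor q x 0 / qGamma_factor q y 0).
  assert (Hk : 1 < k).
  { unfold k. apply Rmult_lt_reg_r with (qGamma_factor q y 0); [assumption |].
    unfold Rdiv. rewrite Rmult_assoc, Rinv_l by lra.
    pose proof (qGamma_factor_strict_anti x y 0 Hxy). lra. }
  assert (Hcomp : forall N, k * qGamma_partial q y (S N) <= qGamma_partial q x (S N)).
  { induction N as [|N IH].
    - rewrite !qGamma_partial_S. simpl. unfold k. right. field. lra.
    - rewrite (qGamma_partial_S q y (S N)), (qGamma_partial_S q x (S N)).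
      pose proof (qGamma_factor_strict_anti x y (S N) Hxy).
      pose proof (qGamma_factor_pos y (S N) ltac:(lra)).
      pose proof (qGamma_partial_pos x (S N) ltac:(lra)).
      apply Rle_trans with (qGamma_partial q x (S N) * qGamma_factor q y (S N)); [| nra].
      rewrite <- Rmult_assoc. apply Rmult_le_compat_r; lra. }
  assert (Lx := is_lim_seq_qGamma_partial x ltac:(lra)).
  assert (Ly := is_lim_seq_qGamma_partial y ltac:(lra)).
  apply is_lim_seq_incr_1 in Lx. apply is_lim_seq_incr_1 in Ly.
  assert (Hlim := is_lim_seq_le _ _ _ _ Hcomp (is_lim_seq_scal_l _ k _ Ly) Lx). simpl in Hlim.
  pose proof (qGamma_product_pos y ltac:(lra)). nra.
Qed.

End q_product.

(* Up to an additive constant, [ln (phi t)] is [Phi q a b (alpha + beta t)]. *)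
Definition Phi (q a b z : R) : R :=
  a * (ln (Gamma z) + euler_gamma * z) - b * ln (qGamma_product q z).

Lemma Phi_strict_mono q a b x y : 0 < q < 1 -> 0 < a -> 0 < b -> 1 <= x -> x < y ->
  Phi q a b x < Phi q a b y.
Proof.
  intros Hq Ha Hb Hx Hxy. unfold Phi.
  assert (HG := ln_Gamma_shift_ge (y - x) ltac:(lra) x Hx).
  replace (x + (y - x)) with y in HG by ring.
  assert (HP : ln (qGamma_product q y) < ln (qGamma_product q x))
    by (apply ln_increasing; [apply qGamma_product_pos | apply qGamma_product_strict_anti]; lra).
  nra.
Qed.

Lemma Gamma_qGamma_power_ratio q a b z : 0 < q < 1 -> 0 < z ->
  Rpower (Gamma z) a / Rpower (qGamma q z) b =
  exp (Phi q a b z - a * euler_gamma * z + b * (z - 1) * ln (1 - q)).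
Proof.
  intros Hq Hz. unfold Rpower at 2.
  rewrite qGamma_product_eq, ln_mult, ln_Rpower
    by (apply exp_pos || apply qGamma_product_pos; lra).
  unfold Rpower, Rdiv, Phi. rewrite <- exp_Ropp, <- exp_plus. f_equal. ring.
Qed.

Lemma scaled_Gamma_qGamma_power_ratio q a b c e z : 0 < q < 1 -> 0 < z ->
  Rpower (1 - q) c * exp e * Rpower (Gamma z) a / Rpower (qGamma q z) b =
  exp (c * ln (1 - q) + e + Phi q a b z - a * euler_gamma * z + b * (z - 1) * ln (1 - q)).
Proof.
  intros Hq Hz. unfold Rdiv. rewrite Rmult_assoc.
  change (Rpower (Gamma z) a * / Rpower (qGamma q z) b)
    with (Rpower (Gamma z) a / Rpower (qGamma q z) b).
  rewrite Gamma_qGamma_power_ratio by assumption.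
  unfold Rpower. rewrite <- !exp_plus. f_equal. ring.
Qed.

Lemma affine_gt_1_start_ge_1 alpha beta : 0 < beta ->
  (forall t, 0 < t -> 1 < alpha + beta * t) -> 1 <= alpha.
Proof.
  intros Hbeta Hgt1. apply Rnot_lt_le. intros Hlt.
  specialize (Hgt1 ((1 - alpha) / (2 * beta)) ltac:(apply Rdiv_lt_0_compat; lra)).
  replace (alpha + beta * ((1 - alpha) / (2 * beta))) with ((1 + alpha) / 2) in Hgt1
    by (field; lra).
  lra.
Qed.

Theorem theorem3p8 (q a b alpha beta : R) :
  0 < q < 1 -> 0 < a -> 0 < b -> 0 < alpha -> 0 < beta ->
  (forall t, 0 < t -> 1 < alpha + beta * t) ->
  let phi := fun t =>
    Rpower (1 - q) (- b * beta * t) * exp (a * beta * euler_gamma * t) *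
    Rpower (Gamma (alpha + beta * t)) a /
    Rpower (qGamma q (alpha + beta * t)) b in
  (forall s t, 0 < s -> s < t -> phi s < phi t) /\
  (forall t, 0 < t < 1 ->
     Rpower (1 - q) (b * beta * t) * exp (- a * beta * euler_gamma * t) *
       Rpower (Gamma alpha) a / Rpower (qGamma q alpha) b
     < Rpower (Gamma (alpha + beta * t)) a / Rpower (qGamma q (alpha + beta * t)) b
     /\
     Rpower (Gamma (alpha + beta * t)) a / Rpower (qGamma q (alpha + beta * t)) b
     < Rpower (1 - q) (b * beta * (t - 1)) * exp (a * beta * euler_gamma * (1 - t)) *
       Rpower (Gamma (alpha + beta)) a / Rpower (qGamma q (alpha + beta)) b).
Proof.
  intros Hq Ha Hb Halpha Hbeta Hgt1 phi.
  assert (Halpha1 := affine_gt_1_start_ge_1 alpha beta Hbeta Hgt1).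
  split.
  - intros s t Hs Hst. unfold phi.
    rewrite !scaled_Gamma_qGamma_power_ratio by (assumption || nra).
    apply exp_increasing.
    assert (Phi q a b (alpha + beta * s) < Phi q a b (alpha + beta * t))
      by (apply Phi_strict_mono; nra).
    lra.
  - intros t Ht.
    rewrite !scaled_Gamma_qGamma_power_ratio, Gamma_qGamma_power_ratio by (assumption || nra).
    split; apply exp_increasing.
    + assert (Phi q a b alpha < Phi q a b (alpha + beta * t)) by (apply Phi_strict_mono; nra).
      lra.
    + assert (Phi q a b (alpha + beta * t) < Phi q a b (alpha + beta))
        by (apply Phi_strict_mono; nra).
      lra.
Qed.
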